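(* Let $C$ be a kernel configuration and let $R_C$ be the set of (equivalence classes of) endomorphisms obtained from the generators $$\{\rho[\theta]:\rho\in K[X]\}\cup\{\pi_{\mathrm{Im}(F^C)}:F\subseteq K[X]_{\mathrm{irr}}^{0<C<\infty}\text{ finite}\}\cup\{\eta[\theta]^{-1}:\eta\text{ monic},\ \mathrm{Fac}(\eta)\subseteq K[X]_{\mathrm{irr}}^{C<\infty}\}$$ by finitely many applications of pointwise addition $+$ and composition $\circ$. Then $(R_C,0,\mathrm{Id},+,\circ)$ is a commutative ring with unit, and its characteristic equals $\mathrm{Char}(K)$.
   Context: $K$ is a field, $K[X]_{\mathrm{irr}}$ the set of monic irreducible polynomials; $\mathrm{Fac}(\eta)$ is the set of monic irreducible factors of $\eta$. For $\rho=\sum_i(\rho)_iX^i$, $\rho[\theta]=\sum_i(\rho)_i\theta^i$; $\mathrm{Ker}(\rho),\mathrm{Im}(\rho)$ its kernel and image. A kernel configuration is $C=(c,d)$ with $c:K[X]_{\mathrm{irr}}\to\mathbb N\cup\{\infty\}$, $d\in\mathbb N_{>0}\cup\{\infty\}$, $d=\infty$ or $d=\sum_f\deg(f)c(f)$; $C(f)=c(f)$. $C$ algebraic if $d<\infty$ ($\mathrm{MiPo}(C)=\prod_ff^{C(f)}$), transcendental otherwise. $\theta$ is a $C$-endomorphism if $\mathrm{MiPo}(C)[\theta]=0$ (algebraic), resp. $\mathrm{Ker}(f^{C(f)})=\mathrm{Ker}(f^{C(f)+1})$ whenever $C(f)<\infty$ (transcendental); $C$-image-complete if $\mathrm{Im}(f^{C(f)})=\mathrm{Im}(f^{C(f)+1})$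 whenever $C(f)<\infty$. $K[X]_{\mathrm{irr}}^{0<C<\infty}=\{f:0<C(f)<\infty\}$, $K[X]_{\mathrm{irr}}^{C<\infty}=\{f:C(f)<\infty\}$, $F^C=\prod_{f\in F}f^{C(f)}$. Let $\mathcal T_C$ be the theory of $K$-vector spaces $\mathbb V$ with a $C$-endomorphism $\theta$ that is $C$-image-complete. In each model, for finite $F\subseteq K[X]_{\mathrm{irr}}^{0<C<\infty}$ one has $\mathbb V=\mathrm{Im}(F^C)\oplus\mathrm{Ker}(F^C)$; $\pi_{\mathrm{Im}(F^C)}$ is the projection onto the first summand along the second, and for monic $\eta$ with $\mathrm{Fac}(\eta)\subseteq K[X]_{\mathrm{irr}}^{C<\infty}$, $\eta[\theta]^{-1}(x)$ is the unique $u\in\mathrm{Im}(\mathrm{Fac}(\eta)^C)$ with $\eta[\theta](u)=\pi_{\mathrm{Im}(\mathrm{Fac}(\eta)^C)}(x)$. These are uniformly definable endomorphisms; elements of $R_C$ are regarded as definable functions modulo $\mathcal T_C$, i.e. two of them are equal iff they agree in every model of $\mathcal T_C$. *)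

From HB Require Import structures.
From mathcomp Require Import all_boot all_order all_algebra.
From Stdlib Require Import ClassicalEpsilon.
Set Implicit Arguments. Unset Strict Implicit. Unset Printing Implicit Defensive.
Import GRing.Theory.
Local Open Scope ring_scope.

Section KernelConfigurations.
Variable K : fieldType.

(* N u {oo} is encoded as option nat, with None = oo. *)

Definition mirr (f : {poly K}) : Prop := (f \is monic) /\ irreducible_poly f.

(* A kernel configuration C = (c, d); c is given on all polynomials,
   only its values on K[X]_irr are relevant. *)
Record kconf := KConf { kc_c : {poly K} -> option nat ; kc_d : option nat }.

Definition cnat (c : {poly K} -> option nat) (f : {poly K}) : nat := odflt 0%N (c f).

Definition support_seq (c : {poly K} -> option nat) (s : seq {poly K}) : Prop :=
  uniq s /\ (forall f, f \in s -> mirr f /\ exists k, c f = Some k) /\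
  (forall f, mirr f -> f \notin s -> c f = Some 0%N).

Definition kconf_ok (C : kconf) : Prop :=
  kc_d C <> Some 0%N /\
  forall n, kc_d C = Some n ->
    exists s, support_seq (kc_c C) s /\
      n = (\sum_(f <- s) (size f).-1 * cnat (kc_c C) f)%N.

Definition FC (C : kconf) (F : seq {poly K}) : {poly K} :=
  \prod_(f <- F) f ^+ cnat (kc_c C) f.

Section Model.
Variable V : lmodType K.
Variable theta : V -> V.

Definition peval (rho : {poly K}) (x : V) : V :=
  \sum_(i < size rho) rho`_i *: iter i theta x.

Definition Ker (g : V -> V) (x : V) : Prop := g x = 0.
Definition Im (g : V -> V) (y : V) : Prop := exists x, g x = y.

(* theta is a K-linear endomorphism of V which is a C-endomorphism and
   C-image-complete: (V, theta) is a model of T_C *)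
Definition is_model (C : kconf) : Prop :=
  (forall (a : K) (x y : V), theta (a *: x + y) = a *: theta x + theta y) /\
  (match kc_d C with
   | Some _ => exists s, support_seq (kc_c C) s /\
                 forall x, peval (FC C s) x = 0
   | None => forall f k, mirr f -> kc_c C f = Some k ->
                 forall x, Ker (peval (f ^+ k)) x <-> Ker (peval (f ^+ k.+1)) x
   end) /\
  (forall f k, mirr f -> kc_c C f = Some k ->
     forall y, Im (peval (f ^+ k)) y <-> Im (peval (f ^+ k.+1)) y).

Definition isFac (eta : {poly K}) (s : seq {poly K}) : Prop :=
  uniq s /\ forall f, f \in s <-> (mirr f /\ f %| eta).

Definition facs (eta : {poly K}) : seq {poly K} :=
  epsilon (inhabits [::]) (isFac eta).

Definition proj (C : kconf) (F : seq {poly K}) (x : V) : V :=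
  epsilon (inhabits (0 : V))
    (fun u => Im (peval (FC C F)) u /\ Ker (peval (FC C F)) (x - u)).

Definition pinv (C : kconf) (eta : {poly K}) (x : V) : V :=
  epsilon (inhabits (0 : V))
    (fun u => Im (peval (FC C (facs eta))) u /\
              peval eta u = proj C (facs eta) x).
End Model.

Inductive term :=
| TPoly of {poly K}
| TProj of seq {poly K}
| TInv of {poly K}
| TAdd of term & term
| TComp of term & term.

Fixpoint wf (C : kconf) (t : term) : Prop :=
  match t with
  | TPoly _ => True
  | TProj F => uniq F /\
      forall f, f \in F -> mirr f /\ exists k, kc_c C f = Some k.+1
  | TInv eta => eta \is monic /\
      forall f, mirr f -> f %| eta -> kc_c C f <> None
  | TAdd a b => wf C a /\ wf C b
  | TComp a b => wf C a /\ wf C b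
  end.

Fixpoint interp (C : kconf) (V : lmodType K) (theta : V -> V) (t : term)
    (x : V) : V :=
  match t with
  | TPoly rho => peval theta rho x
  | TProj F => proj theta C F x
  | TInv eta => pinv theta C eta x
  | TAdd a b => interp C theta a x + interp C theta b x
  | TComp a b => interp C theta a (interp C theta b x)
  end.

(* equality modulo T_C: agreement in every model *)
Definition teq (C : kconf) (a b : term) : Prop :=
  forall (V : lmodType K) (theta : V -> V), is_model theta C ->
    forall x, interp C theta a x = interp C theta b x.

Fixpoint tnat (n : nat) : term :=
  match n with
  | 0%N => TPoly 0
  | n'.+1 => TAdd (tnat n') (TPoly 1)
  end.

End KernelConfigurations.

Definition is_comring (T : Type) (P : T -> Prop) (eq : T -> T -> Prop)
    (zero one : T) (add mul : T -> T -> T) : Prop :=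
  (forall a, P a -> eq a a) /\
  (forall a b, P a -> P b -> eq a b -> eq b a) /\
  (forall a b c, P a -> P b -> P c -> eq a b -> eq b c -> eq a c) /\
  P zero /\ P one /\
  (forall a b, P a -> P b -> P (add a b) /\ P (mul a b)) /\
  (forall a a' b b', P a -> P a' -> P b -> P b' -> eq a a' -> eq b b' ->
     eq (add a b) (add a' b') /\ eq (mul a b) (mul a' b')) /\
  (forall a b c, P a -> P b -> P c -> eq (add a (add b c)) (add (add a b) c)) /\
  (forall a b, P a -> P b -> eq (add a b) (add b a)) /\
  (forall a, P a -> eq (add zero a) a) /\
  (forall a, P a -> exists b, P b /\ eq (add a b) zero) /\
  (forall a b c, P a -> P b -> P c -> eq (mul a (mul b c)) (mul (mul a b) c)) /\
  (forall a b, P a -> P b -> eq (mul a b) (mul b a)) /\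
  (forall a, P a -> eq (mul one a) a /\ eq (mul a one) a) /\
  (forall a b c, P a -> P b -> P c ->
     eq (mul a (add b c)) (add (mul a b) (mul a c)) /\
     eq (mul (add a b) c) (add (mul a c) (mul b c))).

Definition is_char (Z : nat -> Prop) (c : nat) : Prop :=
  (c = 0%N /\ forall n, (0 < n)%N -> ~ Z n) \/
  ((0 < c)%N /\ Z c /\ forall n, (0 < n < c)%N -> ~ Z n).

(* Every generator is a K-linear map commuting with all linear maps that commute
   with theta: for rho[theta] this is clear, and pi_{Im(F^C)} x and
   eta[theta]^-1 x are the unique u in Im(F^C) with x - u in Ker(F^C), resp. the
   unique u in Im(Fac(eta)^C) with eta[theta] u = pi x, conditions that such
   maps preserve.  These u exist and are unique because every irreducible
   factor f of F^C, resp. of eta, acts bijectively on Im(F^C), resp.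
   Im(Fac(eta)^C): image-completeness gives surjectivity, and the kernel
   condition (in the algebraic case, coprimality of f with the rest of MiPo(C))
   gives injectivity.  So R_C consists of pairwise commuting linear maps and is
   a commutative ring.  Finally n * Id = 0 in R_C iff n = 0 in K, since T_C has
   a nonzero model: K[X]/(f) for some f with 0 < C(f) < oo when C is algebraic
   and K(X) otherwise, theta being multiplication by X. *)

From HB Require Import structures.
From mathcomp Require Import all_boot all_order all_algebra.
From mathcomp Require Import ring zify.
From Stdlib Require Import ClassicalEpsilon Classical.

Set Implicit Arguments. Unset Strict Implicit. Unset Printing Implicit Defensive.
Import GRing.Theory.
Local Open Scope ring_scope.

Section IrreducibleFactors.
Variable K : fieldType.
Implicit Types p q f g : {poly K}.

Lemma mirr_coprime f g : mirr f -> mirr g -> f != g -> coprimep f g.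
Proof.
move=> [mf irr_f] [mg irr_g] fg; rewrite irreducible_poly_coprime //.
apply: contra fg => /irr_g; rewrite eqp_monic //; apply.
by rewrite neq_ltn irr_f.1 orbT.
Qed.

Lemma mirr_normalize p : irreducible_poly p -> mirr ((lead_coef p)^-1 *: p).
Proof.
move=> irr_p; have lc0 : lead_coef p != 0 by rewrite lead_coef_eq0 irredp_neq0.
have ilc0 : (lead_coef p)^-1 != 0 by rewrite invr_eq0.
split; first by rewrite monicE lead_coefZ mulVf.
split=> [|q q1]; first by rewrite size_scale // irr_p.1.
rewrite dvdpZr // => /(irr_p q q1) qp.
by rewrite (eqp_trans qp) // eqp_sym eqp_scale.
Qed.

Lemma reducible_split p : p != 0 -> size p != 1%N -> ~ irreducible_poly p ->
  exists r q, [/\ p = r * q, r != 0, q != 0, (size r < size p)%N & (size q < size p)%N].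
Proof.
move=> p0 p1 red_p; have sp : (1 < size p)%N.
  by move: p0 p1; rewrite -size_poly_gt0; case: (size p) => [|[]].
have [q [q1 qp nqp]] : exists q, [/\ size q != 1%N, q %| p & ~~ (q %= p)].
  apply: NNPP => hq; apply: red_p; split=> // q q1 qp.
  by apply: contraT => nqp; case: hq; exists q.
have q0 : q != 0 by apply: contraNneq p0 => q0; rewrite q0 dvd0p in qp.
have r0 : p %/ q != 0 by apply: contraNneq p0 => r0; rewrite -(divpK qp) r0 mul0r.
have sq : (size q < size p)%N.
  by rewrite ltn_neqAle dvdp_leq // andbT dvdp_size_eqp.
exists (p %/ q), q; split; rewrite ?divpK //.
have := size_mul r0 q0; rewrite divpK // => sr.
have : (0 < size q)%N by rewrite size_poly_gt0.
by move: q1 sr; move: (size (p %/ q)) (size q) (size p) => a b c; lia.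
Qed.

Lemma nonzero_poly_ind (P : {poly K} -> Prop) :
  (forall c, c != 0 -> P c%:P) -> (forall f, mirr f -> P f) ->
  (forall p q, p != 0 -> q != 0 -> P p -> P q -> P (p * q)) ->
  forall p, p != 0 -> P p.
Proof.
move=> PC Pirr PM p; have [n] := ubnP (size p); elim: n p => // n IH p.
rewrite ltnS => sp p0.
case: (boolP (size p == 1%N)) => [/size_poly1P [c c0 ->]|p1]; first exact: PC.
have [irr_p | red_p] := classic (irreducible_poly p).
  have lc0 : lead_coef p != 0 by rewrite lead_coef_eq0.
  have -> : p = (lead_coef p)%:P * ((lead_coef p)^-1 *: p).
    by rewrite mul_polyC scalerA divff // scale1r.
  apply: PM; [by rewrite polyC_eq0 | | exact: PC | exact/Pirr/mirr_normalize].
  by rewrite scaler_eq0 invr_eq0 negb_or lc0.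
have [r [q [pE r0 q0 sr sq]]] := reducible_split p0 p1 red_p.
rewrite pE; apply: PM => //.
  by apply: IH r0; apply: leq_trans sr sp.
by apply: IH q0; apply: leq_trans sq sp.
Qed.

Lemma isFac_exists p : p != 0 -> exists s, isFac p s.
Proof.
move: p; apply: nonzero_poly_ind => [c c0 | f mf | p q _ _ [s [_ hs]] [t [_ ht]]].
- exists [::]; split=> // f; split=> // [[[_ irr_f] /dvdp_leq]].
  rewrite polyC_eq0 size_polyC c0 => /(_ isT).
  by move: irr_f.1; case: (size f) => [|[]].
- exists [:: f]; split=> // g; rewrite inE; split=> [/eqP -> // | [mg gf]].
  rewrite -eqp_monic //; [|exact: mg.1|exact: mf.1].
  by apply: mf.2 gf; rewrite neq_ltn mg.2.1 orbT.
exists (undup (s ++ t)); split=> [|f]; first exact: undup_uniq.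
rewrite mem_undup mem_cat; split.
  by case/orP=> [/hs | /ht] [mf fd]; split=> //; [apply: dvdp_mulr | apply: dvdp_mull].
move=> [mf fpq]; case: (boolP (f %| p)) => fp; first by apply/orP; left; apply/hs.
have cfp : coprimep f p by rewrite irreducible_poly_coprime //; case: mf.
by apply/orP; right; apply/ht; split; rewrite // -(Gauss_dvdpr _ cfp).
Qed.

Lemma facsP (eta : {poly K}) : eta != 0 -> isFac eta (facs eta).
Proof. by move=> eta0; apply: epsilon_spec; apply: isFac_exists. Qed.

End IrreducibleFactors.

Section KernelConfiguration.
Variables (K : fieldType) (C : kconf K).
Implicit Types (f g : {poly K}) (F s : seq {poly K}).

Lemma cnatE f k : kc_c C f = Some k -> cnat (kc_c C) f = k.
Proof. by rewrite /cnat => ->. Qed.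

Definition fin_irr F := forall f, f \in F -> mirr f /\ exists k, kc_c C f = Some k.

Lemma coprimep_FC f F :
  mirr f -> (forall g, g \in F -> mirr g /\ g != f) -> coprimep f (FC C F).
Proof.
move=> mf hF; rewrite /FC big_seq.
apply: (big_ind (coprimep f)) => [|p q|g gF]; first exact: coprimep1.
  by rewrite coprimepMr => -> ->.
by have [mg gf] := hF g gF; apply/coprimep_expr/mirr_coprime; rewrite // eq_sym.
Qed.

Lemma FC_split_coprime s f k : support_seq (kc_c C) s -> mirr f ->
  kc_c C f = Some k -> exists2 Q, FC C s = f ^+ k * Q & coprimep f Q.
Proof.
move=> [us [hs hout]] mf hk; have [fs | fNs] := boolP (f \in s).
  exists (FC C (rem f s)); first by rewrite /FC (big_rem f fs) /= (cnatE hk).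
  apply: coprimep_FC => // g gs; have [mg _] := hs g (mem_rem gs); split=> //.
  by apply: contraTneq gs => ->; rewrite mem_rem_uniqF.
move: (hout f mf fNs); rewrite hk => -[->]; exists (FC C s); first by rewrite mul1r.
apply: coprimep_FC => // g gs; have [mg _] := hs g gs.
by split=> //; apply: contraNneq fNs => <-.
Qed.

Lemma fin_irr_facs eta : eta \is monic ->
  (forall f, mirr f -> f %| eta -> kc_c C f <> None) -> fin_irr (facs eta).
Proof.
move=> /monic_neq0 eta0 hfin f /(facsP eta0).2 [mf feta]; split=> //.
by move: (hfin f mf feta); case: (kc_c C f) => [k _|//]; exists k.
Qed.

End KernelConfiguration.

Section Endomorphism.
Variables (K : fieldType) (V : lmodType K) (theta : V -> V).
Hypothesis theta_linear : linear theta.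
HB.instance Definition _ := GRing.isLinear.Build K V V *:%R theta theta_linear.

Implicit Types p q g : {poly K}.
Local Notation pe := (peval theta).

Lemma peval_wide p n x : (size p <= n)%N ->
  pe p x = \sum_(i < n) p`_i *: iter i theta x.
Proof.
move=> hn; rewrite /peval -!(big_mkord xpredT (fun i => p`_i *: iter i theta x)).
rewrite (big_cat_nat (leq0n _) hn) /= [X in _ + X]big1_seq ?addr0 // => i.
by rewrite mem_index_iota => /andP[_ /andP[hi _]]; rewrite nth_default // scale0r.
Qed.

Lemma peval_linear p : linear (pe p).
Proof.
move=> a x y; rewrite /peval scaler_sumr -big_split /=; apply: eq_bigr => i _.
have -> : iter i theta (a *: x + y) = a *: iter i theta x + iter i theta y.
  by elim: (nat_of_ord i) => //= n ->; rewrite linearP.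
by rewrite scalerDr !scalerA mulrC.
Qed.

HB.instance Definition _ p := GRing.isLinear.Build K V V *:%R (pe p) (peval_linear p).

Lemma peval_comm (L : {linear V -> V}) p :
  (forall x, L (theta x) = theta (L x)) -> forall x, L (pe p x) = pe p (L x).
Proof.
move=> hL x; rewrite /peval linear_sum; apply: eq_bigr => i _.
by rewrite linearZ; congr (_ *: _); elim: (nat_of_ord i) => //= n <-; exact: hL.
Qed.

Lemma peval0 x : pe 0 x = 0.
Proof. by rewrite /peval size_poly0 big_ord0. Qed.

Lemma pevalD p q x : pe (p + q) x = pe p x + pe q x.
Proof.
rewrite !(peval_wide (n := maxn (size p) (size q))) ?leq_maxl ?leq_maxr ?size_polyD //.
by rewrite -big_split; apply: eq_bigr => i _; rewrite coefD scalerDl.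
Qed.

Lemma pevalZ c p x : pe (c *: p) x = c *: pe p x.
Proof.
rewrite !(peval_wide (n := size p)) ?size_scale_leq // scaler_sumr.
by apply: eq_bigr => i _; rewrite coefZ scalerA.
Qed.

Lemma pevalN p x : pe (- p) x = - pe p x.
Proof. by rewrite -(scaleN1r p) pevalZ scaleN1r. Qed.

Lemma pevalC c x : pe c%:P x = c *: x.
Proof. by rewrite (peval_wide (n := 1)) ?size_polyC_leq1 // big_ord1 coefC. Qed.

Lemma peval1 x : pe 1 x = x.
Proof. by rewrite -polyC1 pevalC scale1r. Qed.

Lemma pevalMX p x : pe (p * 'X) x = pe p (theta x).
Proof.
have hs : (size (p * 'X)%R <= (size p).+1)%N.
  by rewrite (leq_trans (size_polyMleq _ _)) // size_polyX addn2.
rewrite (peval_wide _ hs) big_ord_recl coefMX /= scale0r add0r.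
by rewrite (peval_wide (n := size p)) //; apply: eq_bigr => i _; rewrite coefMX /= -iterSr.
Qed.

Lemma pevalM p q x : pe (p * q) x = pe p (pe q x).
Proof.
elim/poly_ind: p x => [|p c IH] x; first by rewrite mul0r !peval0.
rewrite mulrDl -mulrA (mulrC 'X) mulrA mul_polyC pevalD pevalMX IH pevalZ.
by rewrite pevalD pevalMX pevalC (peval_comm (L := theta)).
Qed.

Lemma peval_commp p q x : pe p (pe q x) = pe q (pe p x).
Proof. by rewrite -!pevalM mulrC. Qed.

Lemma peval_ker_coprime p q g x : coprimep p q -> (forall y, pe (g * q) y = 0) ->
  pe (p * g) x = 0 -> pe g x = 0.
Proof.
move=> /Bezout_eq1_coprimepP [[u v] /= e] hq hx.
rewrite -(mul1r g) -e mulrDl -!mulrA pevalD (pevalM u) (pevalM v) hx (mulrC q) hq.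
by rewrite !linear0 addr0.
Qed.

Definition bij_on_im g h :=
  (forall x, exists w, pe g x = pe h (pe g w)) /\
  (forall x, pe h (pe g x) = 0 -> pe g x = 0).

Lemma bij_on_im_surj g h : bij_on_im g h ->
  forall y, Im (pe g) y -> exists u, Im (pe g) u /\ pe h u = y.
Proof.
move=> [hsurj _] _ [x <-]; have [w hw] := hsurj x.
by exists (pe g w); split; [exists w | rewrite hw].
Qed.

Lemma bij_on_im_inj g h : bij_on_im g h ->
  forall u1 u2, Im (pe g) u1 -> Im (pe g) u2 -> pe h u1 = pe h u2 -> u1 = u2.
Proof.
move=> [_ hinj] _ _ [x1 <-] [x2 <-] e; apply/eqP; rewrite -subr_eq0 -linearB.
by apply/eqP/hinj; rewrite !linearB /= e subrr.
Qed.

Lemma bij_on_imMl g1 g2 h : bij_on_im g1 h -> bij_on_im (g1 * g2) h.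
Proof.
move=> [hsurj hinj]; split=> x; last by rewrite !pevalM => /hinj.
have [w hw] := hsurj x; exists w.
by rewrite mulrC pevalM hw -!pevalM; congr (pe _ w); ring.
Qed.

Lemma bij_on_imM g h1 h2 :
  bij_on_im g h1 -> bij_on_im g h2 -> bij_on_im g (h1 * h2).
Proof.
move=> [hsurj1 hinj1] [hsurj2 hinj2]; split=> x.
  have [w hw] := hsurj2 x; have [w' hw'] := hsurj1 w.
  by exists w'; rewrite hw hw' -!pevalM (mulrC h2).
by rewrite pevalM (peval_commp h2 g) => /hinj1; rewrite -peval_commp => /hinj2.
Qed.

Lemma bij_on_imC g c : c != 0 -> bij_on_im g c%:P.
Proof.
move=> c0; split=> x.
  by exists (c^-1 *: x); rewrite pevalC linearZ /= scalerA divff // scale1r.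
by rewrite pevalC; move/(congr1 (fun v => c^-1 *: v)); rewrite scalerA mulVf // scale1r scaler0.
Qed.

Lemma bij_on_im1 g : bij_on_im g 1.
Proof. by rewrite -polyC1; apply/bij_on_imC/oner_neq0. Qed.

Lemma bij_on_imX g h n : bij_on_im g h -> bij_on_im g (h ^+ n).
Proof.
move=> hgh; elim: n => [|n IH]; first by rewrite expr0; apply: bij_on_im1.
by rewrite exprS; apply: bij_on_imM.
Qed.

Section Model.
Variable C : kconf K.
Hypothesis theta_model : is_model theta C.
Implicit Types (f h : {poly K}) (F : seq {poly K}).

Lemma model_ker_stable f k x : mirr f -> kc_c C f = Some k ->
  pe (f ^+ k.+1) x = 0 -> pe (f ^+ k) x = 0.
Proof.
move=> mf hk; have [_ [+ _]] := theta_model.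
case: (kc_d C) => [n [s [hs hFC]] | hker]; last by move/(hker f k mf hk x).2.
have [Q hQ cfQ] := FC_split_coprime hs mf hk.
by rewrite exprS; apply: (peval_ker_coprime cfQ) => y; rewrite -hQ.
Qed.

Lemma bij_on_im_irr f k : mirr f -> kc_c C f = Some k -> bij_on_im (f ^+ k) f.
Proof.
move=> mf hk; have [_ [_ him]] := theta_model; split=> x.
  have [w hw] := (him f k mf hk (pe (f ^+ k) x)).1 (ex_intro _ x erefl).
  by exists w; rewrite -hw exprS pevalM.
by rewrite -pevalM -exprS => /model_ker_stable; apply.
Qed.

Lemma bij_on_im_FC_factor F f h : f \in F ->
  bij_on_im (f ^+ cnat (kc_c C) f) h -> bij_on_im (FC C F) h.
Proof. by move=> fF; rewrite /FC (big_rem f fF) /=; apply: bij_on_imMl. Qed.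

Lemma bij_on_im_FC_prod F g :
  (forall f, f \in F -> bij_on_im g (f ^+ cnat (kc_c C) f)) ->
  bij_on_im g (FC C F).
Proof.
move=> hF; rewrite /FC big_seq.
apply: (big_ind (bij_on_im g)) => [|h1 h2|]; last exact: hF.
  exact: bij_on_im1 g.
exact: bij_on_imM.
Qed.

Lemma bij_on_im_FC F : fin_irr C F -> bij_on_im (FC C F) (FC C F).
Proof.
move=> hF; apply: bij_on_im_FC_prod => f fF; apply: (bij_on_im_FC_factor fF).
have [mf [k hk]] := hF f fF; rewrite (cnatE hk).
exact/bij_on_imX/bij_on_im_irr.
Qed.

Lemma bij_on_im_facs eta : eta \is monic ->
  (forall f, mirr f -> f %| eta -> kc_c C f <> None) ->
  bij_on_im (FC C (facs eta)) eta.
Proof.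
move=> eta_monic eta_fin; have eta0 := monic_neq0 eta_monic.
suff : forall p, p != 0 -> p %| eta -> bij_on_im (FC C (facs eta)) p.
  by apply; rewrite ?dvdpp.
apply: nonzero_poly_ind => [c c0 _ | f mf feta | p q _ _ hp hq pq_eta].
- exact: bij_on_imC _ c0.
- have fs := (facsP eta0).2 f; move: (eta_fin f mf feta).
  case hk: (kc_c C f) => [k|//] _; apply: (bij_on_im_FC_factor (fs.2 (conj mf feta))).
  by rewrite (cnatE hk); apply: bij_on_im_irr.
apply: bij_on_imM.
  exact/hp/(dvdp_trans _ pq_eta)/dvdp_mulr.
exact/hq/(dvdp_trans _ pq_eta)/dvdp_mull.
Qed.

Section Projection.
Variable F : seq {poly K}.
Hypothesis F_fin : fin_irr C F.
Local Notation P := (FC C F).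
Local Notation pr := (proj theta C F).

Lemma proj_spec x : Im (pe P) (pr x) /\ Ker (pe P) (x - pr x).
Proof.
apply: (epsilon_spec (inhabits (0 : V)) (fun u => Im (pe P) u /\ Ker (pe P) (x - u))).
have [u [Pu Pux]] := bij_on_im_surj (bij_on_im_FC F_fin) (ex_intro _ x erefl).
by exists u; split; rewrite // /Ker linearB /= Pux subrr.
Qed.

Lemma proj_uniq x u : Im (pe P) u -> Ker (pe P) (x - u) -> pr x = u.
Proof.
move=> Pu; rewrite /Ker linearB /= => /subr0_eq Pxu; have [Ppr] := proj_spec x.
rewrite /Ker linearB /= => /subr0_eq Pxpr.
by apply: (bij_on_im_inj (bij_on_im_FC F_fin)) => //; rewrite -Pxpr.
Qed.

Lemma proj_linear : linear pr.
Proof.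
move=> a x y; apply: proj_uniq.
  have [[w1 <-] _] := proj_spec x; have [[w2 <-] _] := proj_spec y.
  by exists (a *: w1 + w2); rewrite linearP.
have -> : a *: x + y - (a *: pr x + pr y) = a *: (x - pr x) + (y - pr y).
  by rewrite opprD addrACA scalerBr.
by rewrite /Ker linearP /= (proj_spec x).2 (proj_spec y).2 scaler0 addr0.
Qed.

Lemma proj_comm (L : {linear V -> V}) : (forall x, L (theta x) = theta (L x)) ->
  forall x, L (pr x) = pr (L x).
Proof.
move=> hL x; symmetry; apply: proj_uniq.
  by have [[w <-] _] := proj_spec x; exists (L w); rewrite peval_comm.
by rewrite /Ker -linearB -(peval_comm _ hL) (proj_spec x).2 linear0.
Qed.

End Projection.

Section Inverse.
Variable eta : {poly K}.
Hypotheses (eta_monic : eta \is monic)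
  (eta_fin : forall f, mirr f -> f %| eta -> kc_c C f <> None).
Local Notation Q := (FC C (facs eta)).
Local Notation inv := (pinv theta C eta).
Local Notation pr := (proj theta C (facs eta)).

Lemma pinv_spec x : Im (pe Q) (inv x) /\ pe eta (inv x) = pr x.
Proof.
apply: (epsilon_spec (inhabits (0 : V)) (fun u => Im (pe Q) u /\ pe eta u = pr x)).
apply: (bij_on_im_surj (bij_on_im_facs eta_monic eta_fin)).
exact: (proj_spec (fin_irr_facs eta_monic eta_fin) x).1.
Qed.

Lemma pinv_uniq x u : Im (pe Q) u -> pe eta u = pr x -> inv x = u.
Proof.
move=> Qu etau; have [Qinv etainv] := pinv_spec x.
apply: (bij_on_im_inj (bij_on_im_facs eta_monic eta_fin)) => //.
by rewrite etainv etau.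
Qed.

Lemma pinv_linear : linear inv.
Proof.
move=> a x y; apply: pinv_uniq.
  have [[w1 <-] _] := pinv_spec x; have [[w2 <-] _] := pinv_spec y.
  by exists (a *: w1 + w2); rewrite linearP.
rewrite linearP /= (pinv_spec x).2 (pinv_spec y).2.
by rewrite (proj_linear (fin_irr_facs eta_monic eta_fin)).
Qed.

Lemma pinv_comm (L : {linear V -> V}) : (forall x, L (theta x) = theta (L x)) ->
  forall x, L (inv x) = inv (L x).
Proof.
move=> hL x; symmetry; apply: pinv_uniq.
  by have [[w <-] _] := pinv_spec x; exists (L w); rewrite peval_comm.
rewrite -(peval_comm _ hL) (pinv_spec x).2.
exact: proj_comm (fin_irr_facs eta_monic eta_fin) _ hL x.
Qed.

End Inverse.

Definition central (g : V -> V) := linear g /\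
  forall L : {linear V -> V}, (forall x, L (theta x) = theta (L x)) ->
    forall x, L (g x) = g (L x).

Lemma interp_central t : wf C t -> central (interp C theta t).
Proof.
elim: t => [rho | F | eta | a IHa b IHb | a IHa b IHb] /=.
- by move=> _; split; [exact: peval_linear rho | move=> L; exact: peval_comm].
- move=> [_ hF]; have F_fin : fin_irr C F.
    by move=> f /hF [mf [k hk]]; split=> //; exists k.+1.
  by split; [exact: proj_linear | exact: proj_comm].
- by move=> [eta_monic eta_fin]; split; [exact: pinv_linear | exact: pinv_comm].
- move=> [/IHa [la ca] /IHb [lb cb]]; split=> [c x y | L hL x].
    by rewrite la lb scalerDr addrACA.
  by rewrite linearD /= ca // cb.
move=> [/IHa [la ca] /IHb [lb cb]]; split=> [c x y | L hL x]; first by rewrite lb la.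
by rewrite ca // cb.
Qed.

Lemma interp_comm a b : wf C a -> wf C b ->
  forall x, interp C theta a (interp C theta b x) = interp C theta b (interp C theta a x).
Proof.
move=> /interp_central [_ ca] /interp_central [lb cb] x.
pose Lb : {linear V -> V} := HB.pack (interp C theta b) (GRing.isLinear.Build K V V *:%R _ lb).
apply: esym (ca Lb _ x) => y; exact: esym (cb theta (fun=> erefl) y).
Qed.

End Model.

End Endomorphism.

Lemma model_linear (K : fieldType) (C : kconf K) (V : lmodType K) (theta : V -> V) :
  is_model theta C -> linear theta.
Proof. by case. Qed.

Section RegularModule.
Variables (K : fieldType) (A : comUnitRingType) (phi : {rmorphism {poly K} -> A}).

Definition regmod of {rmorphism {poly K} -> A} : Type := A.
Local Notation M := (regmod phi).
HB.instance Definition _ := GRing.Zmodule.on M.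

Definition regmod_scale (a : K) (x : M) : M := phi a%:P * x.

Fact regmod_scaleA a b x : regmod_scale a (regmod_scale b x) = regmod_scale (a * b) x.
Proof. by rewrite /regmod_scale polyCM rmorphM mulrA. Qed.
Fact regmod_scale1 : left_id 1 regmod_scale.
Proof. by move=> x; rewrite /regmod_scale rmorph1 mul1r. Qed.
Fact regmod_scaleDr : right_distributive regmod_scale +%R.
Proof. by move=> a x y; rewrite /regmod_scale mulrDr. Qed.
Fact regmod_scaleDl x : {morph regmod_scale^~ x : a b / a + b}.
Proof. by move=> a b; rewrite /regmod_scale polyCD rmorphD mulrDl. Qed.

HB.instance Definition _ := GRing.Zmodule_isLmodule.Build K M
  regmod_scaleA regmod_scale1 regmod_scaleDr regmod_scaleDl.

Lemma regmod_scaleE a (x : M) : a *: x = phi a%:P * x.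
Proof. by []. Qed.

Definition regmod_X (x : M) : M := phi 'X * x.

Lemma regmod_linear : linear regmod_X.
Proof. by move=> a x y; rewrite /regmod_X !regmod_scaleE mulrDr mulrCA. Qed.

Lemma regmod_peval p (x : M) : peval regmod_X p x = phi p * x.
Proof.
have iterE i : iter i regmod_X x = phi ('X ^+ i) * x.
  elim: i => [|i IH] /=; first by rewrite expr0 rmorph1 mul1r.
  by rewrite IH /regmod_X mulrA -rmorphM -exprS.
rewrite /peval -[in RHS](coefK p) poly_def rmorph_sum mulr_suml.
by apply: eq_bigr => i _; rewrite iterE regmod_scaleE -mul_polyC rmorphM mulrA.
Qed.

Lemma regmod_Im p (y : M) : Im (peval regmod_X p) y <-> exists x : M, phi p * x = y.
Proof. by split=> -[x <-]; exists x; rewrite regmod_peval. Qed.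

Lemma regmod_im_stable f k : phi f \is a GRing.unit \/ (phi f = 0 /\ (0 < k)%N) ->
  forall y, Im (peval regmod_X (f ^+ k)) y <-> Im (peval regmod_X (f ^+ k.+1)) y.
Proof.
move=> hf y; rewrite !regmod_Im !rmorphXn; case: hf => [uf | [-> k0]].
  have surj n : exists x : M, phi f ^+ n * x = y.
    by exists ((phi f ^+ n)^-1 * y); rewrite mulrA mulrV ?mul1r // unitrX.
  by split=> _; apply: surj.
by rewrite !expr0n -(prednK k0); split=> -[x <-]; exists x; rewrite !mul0r.
Qed.

Lemma regmod_ker_stable f k : phi f \is a GRing.unit ->
  forall x, Ker (peval regmod_X (f ^+ k)) x <-> Ker (peval regmod_X (f ^+ k.+1)) x.
Proof.
move=> uf x; rewrite /Ker !regmod_peval !rmorphXn.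
have unitXx n : phi f ^+ n * x = 0 <-> x = 0.
  by split=> [/(congr1 (GRing.mul (phi f ^+ n)^-1)) | ->]; rewrite ?mulr0 // mulKr ?unitrX.
by rewrite !unitXx.
Qed.

End RegularModule.

Section NonzeroModel.
Variables (K : fieldType) (C : kconf K).

Definition has_nonzero_model :=
  exists (V : lmodType K) (theta : V -> V) (x : V), is_model theta C /\ x != 0.

Lemma transcendental_nonzero_model : kc_d C = None -> has_nonzero_model.
Proof.
move=> hd; pose phi : {rmorphism {poly K} -> {fraction {poly K}}} := @tofrac _.
have unit_f f : mirr f -> phi f \is a GRing.unit.
  by move=> [_ /irredp_neq0 f0]; rewrite unitfE tofrac_eq0.
exists (regmod phi), (@regmod_X _ _ phi), 1; split; last exact: oner_neq0.
split; first exact: regmod_linear.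
rewrite hd; split=> f k mf _.
  exact/regmod_ker_stable/unit_f.
by apply: regmod_im_stable; left; apply: unit_f.
Qed.

Lemma algebraic_nonzero_model n : kconf_ok C -> kc_d C = Some n -> has_nonzero_model.
Proof.
move=> [d0 hsum] hd; have [s [hs hn]] := hsum n hd; have [_ [hs_in _]] := hs.
have /hasP [f0 f0s cf0] : has (fun f => cnat (kc_c C) f != 0%N) s.
  apply/negPn/negP => /hasPn c0; apply: d0; rewrite hd hn big1_seq // => f /andP[_].
  by move/c0; rewrite negbK => /eqP ->; rewrite muln0.
have [[mf0 irr_f0] _] := hs_in f0 f0s.
pose phi : {rmorphism {poly K} -> {poly %/ f0}} := in_qpoly f0.
have phi_f0 : phi f0 = 0.
  have mk_f0 : mk_monic f0 = f0 by rewrite /mk_monic irr_f0.1 mf0.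
  by apply: val_inj => /=; rewrite mk_f0; apply: Pdiv.Ring.rmodpp; apply: mulrC.
have unit_f f : mirr f -> f != f0 -> phi f \is a GRing.unit.
  move=> mf ff0; have /Bezout_eq1_coprimepP [[u v] /= e] : coprimep f0 f.
    by apply: mirr_coprime; rewrite // eq_sym.
  apply/unitrPr; exists (phi v); rewrite mulrC.
  by have := congr1 phi e; rewrite rmorphD !rmorphM phi_f0 mulr0 add0r rmorph1.
exists (regmod phi), (@regmod_X _ _ phi), 1; split; last exact: oner_neq0.
split; first exact: regmod_linear.
rewrite hd; split.
  exists s; split=> // x; rewrite regmod_peval /FC (big_rem f0 f0s) /=.
  by rewrite rmorphM rmorphXn phi_f0 expr0n (negbTE cf0) !mul0r.
move=> f k mf hk; apply: regmod_im_stable; have [ef | ff0] := eqVneq f f0.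
  by right; subst f; split=> //; rewrite lt0n -(cnatE hk).
by left; apply: unit_f.
Qed.

Lemma nonzero_model : kconf_ok C -> has_nonzero_model.
Proof.
move=> hC; case hd: (kc_d C) => [n|]; last exact: transcendental_nonzero_model.
exact: algebraic_nonzero_model hC hd.
Qed.

End NonzeroModel.

Section DefinableRing.
Variables (K : fieldType) (C : kconf K).

Lemma teq_comring :
  is_comring (wf C) (teq C) (TPoly 0) (TPoly 1) (@TAdd K) (@TComp K).
Proof.
rewrite /is_comring; repeat match goal with |- _ /\ _ => split end.
- by move=> a _ V th hm x.
- by move=> a b _ _ hab V th hm x; rewrite (hab V th hm x).
- by move=> a b c _ _ _ hab hbc V th hm x; rewrite (hab V th hm x) (hbc V th hm x).
- by [].
- by [].
- by move=> a b wa wb.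
- move=> a a' b b' _ _ _ _ ha hb; split=> V th hm x /=.
    by rewrite (ha V th hm x) (hb V th hm x).
  by rewrite (hb V th hm x) (ha V th hm).
- by move=> a b c _ _ _ V th hm x /=; rewrite addrA.
- by move=> a b _ _ V th hm x /=; rewrite addrC.
- by move=> a _ V th hm x /=; rewrite peval0 add0r.
- move=> a wa; exists (TComp (TPoly (-1)) a); split=> // V th hm x /=.
  by rewrite pevalN peval1 subrr peval0.
- by move=> a b c _ _ _ V th hm x.
- by move=> a b wa wb V th hm x /=; rewrite (interp_comm (model_linear hm) hm wa wb).
- by move=> a _; split=> V th hm x /=; rewrite peval1.
- move=> a b c wa _ _; split=> V th hm x //=.
  have [la _] := interp_central (model_linear hm) hm wa.
  by rewrite -[interp C th b x]scale1r (la 1) !scale1r.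
Qed.

End DefinableRing.

Lemma interp_tnat (K : fieldType) (C : kconf K) (V : lmodType K) (theta : V -> V) n x :
  interp C theta (tnat K n) x = x *+ n.
Proof.
elim: n => [|n IH] /=; first by rewrite peval0.
by rewrite IH peval1 mulrSr.
Qed.

Lemma teq_tnat0 (K : fieldType) (C : kconf K) n :
  kconf_ok C -> teq C (tnat K n) (TPoly 0) <-> n%:R = 0 :> K.
Proof.
move=> hC; split=> [h | n0 V th _ x]; last first.
  by rewrite interp_tnat /= peval0 -scaler_nat n0 scale0r.
have [V [th [x [hm x0]]]] := nonzero_model hC.
have := h V th hm x; rewrite interp_tnat /= peval0 -scaler_nat => nx0.
apply: contraNeq x0 => n0.
by rewrite -[x]scale1r -(mulVf n0) -scalerA nx0 scaler0.
Qed.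

Lemma is_char_iff (Z1 Z2 : nat -> Prop) c :
  (forall n, Z1 n <-> Z2 n) -> is_char Z1 c <-> is_char Z2 c.
Proof.
suff char_sub Z Z' : (forall n, Z n <-> Z' n) -> is_char Z c -> is_char Z' c.
  by move=> Z12; split; apply: char_sub => // n; apply: iff_sym.
move=> ZZ' [[c0 nZ] | [c0 [Zc nZ]]]; [left | right].
  by split=> // n n0 /ZZ'; apply: nZ.
by split=> //; split=> [|n nc /ZZ']; [apply/ZZ' | apply: nZ].
Qed.

Theorem theorem3p19 (K : fieldType) (C : kconf K) :
  kconf_ok C ->
  is_comring (wf C) (teq C) (TPoly 0) (TPoly 1) (@TAdd K) (@TComp K) /\
  (forall c : nat,
     is_char (fun n => (n%:R : K) = 0) c <->
     is_char (fun n => teq C (tnat K n) (TPoly 0)) c).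
Proof.
move=> hC; split; first exact: teq_comring.
by move=> c; apply: is_char_iff => n; rewrite teq_tnat0.
Qed.
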